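(* Let $R$ be a DT ring. Then $6\in J(R)$.
   Context: All rings are associative with identity; $J(R)$ is the Jacobson radical, $U(R)$ the group of units. $\Delta(R)=\{x\in R: x+u\in U(R)\text{ for all }u\in U(R)\}$. $\mathrm{Tr}(R)=\{x\in R: x^3=x\}$. A ring $R$ is a DT ring if every $r\in R$ can be written $r=e+d$ with $e\in\mathrm{Tr}(R)$ and $d\in\Delta(R)$. *)

From mathcomp Require Import all_boot all_algebra.
Set Implicit Arguments. Unset Strict Implicit. Unset Printing Implicit Defensive.
Import GRing.Theory.
Local Open Scope ring_scope.

(* Jacobson radical membership, via the standard element-wise characterization:
   x \in J(R)  <->  1 - r x is a unit for every r \in R. *)
Definition in_jacobson (R : unitRingType) (x : R) : Prop :=
  forall r : R, (1 - r * x) \is a GRing.unit.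

Definition in_Delta (R : unitRingType) (x : R) : Prop :=
  forall u : R, u \is a GRing.unit -> (x + u) \is a GRing.unit.

Definition tripotent (R : unitRingType) (x : R) : Prop := x ^+ 3 = x.

Definition DT_ring (R : unitRingType) : Prop :=
  forall r : R, exists e d : R, tripotent e /\ in_Delta d /\ r = e + d.

(* Writing 2 = e + d with e tripotent and d in Delta, the identity
   (2 - d)^3 = 2 - d expresses 6 as 11 d - 6 d^2 + d^3, and Delta is closed
   under sums, negatives and products, so 6 \in Delta.  For r = e + d, the
   element 1 - 6 e is a unit because (1 - 6 e)(1 + 6 e) = 1 - 36 e^2, where
   36 e^2 = 18 (2 e^2) lies in Delta as e^2 is idempotent; hence
   1 - 6 r = (1 - 6 e) - 6 d is a unit. *)

From mathcomp Require Import all_boot all_algebra.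
From mathcomp Require Import ring.
Set Implicit Arguments. Unset Strict Implicit. Unset Printing Implicit Defensive.
Local Open Scope ring_scope.
Import GRing.Theory.

Section DeltaClosure.
Variable R : unitRingType.
Implicit Types x y f u : R.

Lemma Delta0 : in_Delta (0 : R).
Proof. by move=> u Uu; rewrite add0r. Qed.

Lemma DeltaD x y : in_Delta x -> in_Delta y -> in_Delta (x + y).
Proof. by move=> Dx Dy u Uu; rewrite -addrA; apply/Dx/Dy. Qed.

Lemma DeltaN x : in_Delta x -> in_Delta (- x).
Proof. by move=> Dx u Uu; rewrite -[u]opprK -opprD unitrN; apply: Dx; rewrite unitrN. Qed.

Lemma DeltaMn x n : in_Delta x -> in_Delta (x *+ n).
Proof.
move=> Dx; elim: n => [|n IHn]; first by rewrite mulr0n; apply: Delta0.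
by rewrite mulrS; apply: DeltaD.
Qed.

Lemma Delta_unit x : in_Delta x -> (1 + x) \is a GRing.unit.
Proof. by move=> Dx; rewrite addrC; apply: Dx; apply: unitr1. Qed.

Lemma Delta_mulr_unit x u : in_Delta x -> u \is a GRing.unit -> in_Delta (x * u).
Proof.
move=> Dx Uu w Uw.
have -> : x * u + w = (x + w / u) * u by rewrite mulrDl divrK.
by rewrite unitrMl //; apply: Dx; rewrite unitrMl ?unitrV.
Qed.

Lemma DeltaM x y : in_Delta x -> in_Delta y -> in_Delta (x * y).
Proof.
move=> Dx Dy; have -> : x * y = x * (y + 1) - x by rewrite mulrDr mulr1 addrK.
by apply: DeltaD (DeltaN Dx); apply: Delta_mulr_unit => //; apply: Dy (unitr1 R).
Qed.

Lemma DeltaX x n : in_Delta x -> in_Delta (x ^+ n.+1).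
Proof.
move=> Dx; elim: n => [|n IHn]; first by rewrite expr1.
by rewrite exprS; apply: DeltaM.
Qed.

Lemma Delta_mul_idem2 x f : in_Delta x -> f * f = f -> in_Delta (x * f *+ 2).
Proof.
move=> Dx ff.
have -> : x * f *+ 2 = x - x * (1 - f *+ 2) by rewrite mulrBr mulr1 opprB addrC subrK mulrnAr.
have inv : (1 - f *+ 2) * (1 - f *+ 2) = 1.
  by rewrite mulrBl mul1r mulrBr mulr1 mulrnAl mulrnAr ff -mulrnA -[(2 * 2)%N]/(2 + 2)%N mulrnDr opprB addrK subrK.
apply: DeltaD Dx (DeltaN (Delta_mulr_unit Dx _)).
by apply/unitrP; exists (1 - f *+ 2).
Qed.

End DeltaClosure.

Section DTRing.
Variable R : unitRingType.

Lemma Delta_cube_sub_nat n (d : R) :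
  in_Delta d -> tripotent (n%:R - d) -> in_Delta (n%:R ^+ 3 - n%:R : R).
Proof.
move=> Dd tri_e.
have cd : commr_rmorph (intr : int -> R) d by move=> z; apply: commr_int.
have poly_id : n%:R ^+ 3 - n%:R = ('X *+ (3 * n ^ 2) - 'X ^+ 2 *+ (3 * n) + 'X ^+ 3 - 'X)
    + ((n%:R - 'X) ^+ 3 - (n%:R - 'X)) :> {poly int} by ring.
have := congr1 (horner_morph cd) poly_id.
rewrite !(rmorph_nat, rmorphB, rmorphD, rmorphXn, rmorphMn) /= horner_morphX.
rewrite tri_e subrr addr0 => ->.
apply: DeltaD (DeltaN Dd); apply: DeltaD (DeltaX 2 Dd).
by apply: DeltaD (DeltaMn _ Dd) (DeltaN (DeltaMn _ (DeltaX 1 Dd))).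
Qed.

Lemma tripotent_unit_1_sub_mul_even n (e : R) :
  in_Delta (n.*2%:R : R) -> tripotent e -> (1 - n.*2%:R * e) \is a GRing.unit.
Proof.
move=> D2n tri_e; set c : R := n.*2%:R.
have ce : GRing.comm c e by apply/commr_sym/commr_nat.
have ff : e ^+ 2 * e ^+ 2 = e ^+ 2 by rewrite -exprD (_ : (2 + 2 = 3 + 1)%N) // exprD tri_e expr1 -expr2.
have sq : (1 - c * e) * (1 + c * e) = 1 - (c *+ n) * e ^+ 2 *+ 2.
  rewrite mulrBl mul1r mulrDr mulr1 opprD addrA addrK.
  rewrite mulrA -(mulrA c) -ce mulrA -[c * c * e * e]mulrA -[e * e]expr2.
  by rewrite [c * c]mulr_natr -muln2 mulrnA mulrnAl.
have Dsq : in_Delta ((c *+ n) * e ^+ 2 *+ 2) := Delta_mul_idem2 (DeltaMn n D2n) ff.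
have : ((1 - c * e) * (1 + c * e)) \is a GRing.unit.
  by rewrite sq; apply: Delta_unit (DeltaN Dsq).
rewrite unitrM_comm => [/andP[]//|].
by apply: commrD (commr1 _) _; apply/commr_sym/commrB; [apply: commr1 | apply: commr_refl].
Qed.

Lemma DT_ring_Delta6 : DT_ring R -> in_Delta (6%:R : R).
Proof.
move=> DT; have [e [d [tri_e [Dd two_ed]]]] := DT 2%:R.
have -> : 6%:R = 2%:R ^+ 3 - 2%:R :> R by rewrite -natrX -natrB.
by apply: (Delta_cube_sub_nat Dd); rewrite two_ed addrK.
Qed.

End DTRing.

Theorem corollary2p8 (R : unitRingType) : DT_ring R -> in_jacobson (6%:R : R).
Proof.
move=> DT r; have D6 := DT_ring_Delta6 DT.
have [e [d [tri_e [Dd ->]]]] := DT r.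
rewrite commr_nat mulrDr opprD addrA addrC.
exact: (DeltaN (DeltaM D6 Dd)) _ (tripotent_unit_1_sub_mul_even (n := 3) D6 tri_e).
Qed.
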